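(* Let $\gamma\in(0,\tfrac12)$, and let $\mathbf{w}\in\mathbb{R}^R$ be a fixed vector of regularization weights with strictly positive entries, and set $w_o=\min_{k=1,\dots,R} w_k$. Let $\boldsymbol{\theta}^\star\in\arg\min_{\boldsymbol{\theta}\in\mathbb{R}^R}\mathcal{R}(\boldsymbol{\theta})$ and $$\widehat{\boldsymbol{\theta}}\in\arg\min_{\boldsymbol{\theta}\in\mathbb{R}^R}\; -\frac1n\ln p_{\boldsymbol{\theta}}(\mathbf{y}\mid\mathbf{r}) + n^{-\gamma}\,\|\mathbf{w}\odot\boldsymbol{\theta}\|_1 ,$$ and assume both minimizers exist. Then $$\mathcal{R}(\widehat{\boldsymbol{\theta}})\le \mathcal{R}(\boldsymbol{\theta}^\star)+2n^{-\gamma}\,\|\mathbf{w}\odot\boldsymbol{\theta}^\star\|_1$$ holds with probability at least $$\max\Big(0,\;1-2R\exp\Big\{-\frac{w_o^2\,n^{1-2\gamma}}{2Y^2}\Big\}\Big).$$ The bound requires no assumption that $p(y\mid r)$ belongs to the Poisson model class.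
   Context: A spatial domain is partitioned into $R$ disjoint regions indexed by $r\in\{1,\dots,R\}$. Data $(\mathbf{r},\mathbf{y})=\{(r_1,y_1),\dots,(r_n,y_n)\}$ are $n$ independent draws $(r_i,y_i)\sim p(r)p(y\mid r)$ from an unknown distribution, where the counts satisfy $y_i\in\{0,1,\dots,Y\}$ for a known maximum count $Y$. Write $p(\mathbf{y}\mid\mathbf{r})=\prod_{i=1}^n p(y_i\mid r_i)$ and $\mathbb{E}[y\mid r]$ for the true conditional mean. Model class: for $\boldsymbol{\theta}\in\mathbb{R}^R$, $p_{\boldsymbol{\theta}}(y\mid r)$ is the Poisson distribution with mean $\mathbb{E}_{\boldsymbol{\theta}}[y\mid r]=\exp(\boldsymbol{\phi}(r)^\top\boldsymbol{\theta})$, where $\boldsymbol{\phi}(r)=(\phi_1(r),\dots,\phi_R(r))^\top$ is a fixed spatial basis vector (cubic B-spline values, $\phi_k$ centered at region $k$) with $0\le\phi_k(r)\le 1$ for all $k,r$; and $p_{\boldsymbol{\theta}}(\mathbf{y}\mid\mathbf{r})=\prod_{i=1}^n p_{\boldsymbol{\theta}}(y_i\mid r_i)$. Out-of-sample accuracy (KL divergence per sample, conditional on $\mathbf{r}$): $$\mathcal{R}(\boldsymbol{\theta})=\frac1n\,\mathbb{E}_{\mathbf{y}\mid\mathbf{r}}\Big[\ln\frac{p(\mathbf{y}\mid\mathbf{r})}{p_{\boldsymbol{\theta}}(\mathbf{y}\mid\mathbf{r})}\Big].$$ $\odot$ denotes the elementwise (Hadamard) product. *)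

From HB Require Import structures.
From mathcomp Require Import all_boot all_order all_algebra.
From mathcomp Require Import all_classical all_reals all_analysis.
Set Implicit Arguments. Unset Strict Implicit. Unset Printing Implicit Defensive.
Import Order.TTheory GRing.Theory Num.Theory.
Local Open Scope ring_scope.

Section PoissonModel.
Variable K : realType.

Definition lin (R : nat) (phi : 'I_R -> 'rV[K]_R) (r : 'I_R) (th : 'rV[K]_R) : K :=
  \sum_(k < R) phi r 0 k * th 0 k.

Definition pois_pmf (mu : K) (y : nat) : K := mu ^+ y * expR (- mu) / (y`!)%:R.

Definition model_pmf (R : nat) (phi : 'I_R -> 'rV[K]_R) (th : 'rV[K]_R)
  (r : 'I_R) (y : nat) : K := pois_pmf (expR (lin phi r th)) y.

Definition joint_model (R n Y : nat) (phi : 'I_R -> 'rV[K]_R) (th : 'rV[K]_R)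
  (rs : 'I_n -> 'I_R) (ys : {ffun 'I_n -> 'I_Y.+1}) : K :=
  \prod_(i < n) model_pmf phi th (rs i) (ys i).

(* true p(y | r) = prod_i p(y_i | r_i), with p(. | r) = q r on {0..Y} *)
Definition joint_true (R n Y : nat) (q : 'I_R -> 'I_Y.+1 -> K)
  (rs : 'I_n -> 'I_R) (ys : {ffun 'I_n -> 'I_Y.+1}) : K :=
  \prod_(i < n) q (rs i) (ys i).

Definition prob (R n Y : nat) (q : 'I_R -> 'I_Y.+1 -> K) (rs : 'I_n -> 'I_R)
  (E : pred {ffun 'I_n -> 'I_Y.+1}) : K :=
  \sum_(ys : {ffun 'I_n -> 'I_Y.+1} | E ys) joint_true q rs ys.

(* out-of-sample risk R(theta) = (1/n) E_{y|r}[ ln p(y|r)/p_theta(y|r) ]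
   (terms with p(y|r) = 0 contribute 0, as ln 0 = 0 here and they are multiplied by 0) *)
Definition risk (R n Y : nat) (q : 'I_R -> 'I_Y.+1 -> K) (phi : 'I_R -> 'rV[K]_R)
  (rs : 'I_n -> 'I_R) (th : 'rV[K]_R) : K :=
  n%:R^-1 * \sum_(ys : {ffun 'I_n -> 'I_Y.+1})
      joint_true q rs ys * (ln (joint_true q rs ys) - ln (joint_model phi th rs ys)).

Definition wl1 (R : nat) (w th : 'rV[K]_R) : K := \sum_(k < R) `|w 0 k * th 0 k|.

Definition pen_obj (R n Y : nat) (phi : 'I_R -> 'rV[K]_R) (rs : 'I_n -> 'I_R)
  (gamma : K) (w : 'rV[K]_R) (ys : {ffun 'I_n -> 'I_Y.+1}) (th : 'rV[K]_R) : K :=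
  - (n%:R^-1 * ln (joint_model phi th rs ys)) + (n%:R `^ (- gamma)) * wl1 w th.

End PoissonModel.

(* Write the log-likelihood of the
   Poisson model as an exponential family: ln p_theta(y|r) =
   <theta, T(y)> - A(theta) - B(y), with sufficient statistic T.  Then the
   penalised objective equals the risk, plus a theta-free term, minus the
   empirical noise (1/n) <theta, T(y) - E T>, plus the penalty
   n^-gamma ||w . theta||_1.  On the event where every coordinate of the
   centred statistic satisfies |T_k - E T_k| <= n^(1-gamma) w_k, the noise is
   dominated by the penalty, and a deterministic argument gives the oracle
   inequality.  Each T_k - E T_k is a sum of n independent centred terms
   bounded by Y, so Hoeffding's inequality and a union bound over the 2R tails
   bound the probability of the complementary event. *)

From HB Require Import structures.
From mathcomp Require Import all_boot all_order all_algebra.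
From mathcomp Require Import all_classical all_reals all_analysis.
From mathcomp Require Import ring lra zify.
Import Order.TTheory GRing.Theory Num.Theory.
Set Implicit Arguments. Unset Strict Implicit. Unset Printing Implicit Defensive.
Local Open Scope ring_scope.

Section ExponentialBounds.
Variable K : realType.

(* 2^j j! <= (2j)!: compares the even terms of the series of cosh a with
   those of expR (a^2 / 2). *)
Lemma pow2_fact_le_fact_double (j : nat) : (2 ^ j * j`! <= (j.*2)`!)%N.
Proof.
elim: j => [//|j IH].
rewrite doubleS !factS expnS.
have -> : (2 * 2 ^ j * (j.+1 * j`!) = (2 * j.+1) * (2 ^ j * j`!))%N by nia.
apply: leq_mul; first by rewrite -mul2n mulnS.
by apply: leq_trans IH _; apply: leq_pmull.
Qed.

Lemma even_exp_coeff_le (a : K) (j : nat) :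
  a ^+ j.*2 / (j.*2)`!%:R <= exp_coeff (a ^+ 2 / 2) j.
Proof.
rewrite /exp_coeff /= -mul2n exprM expr_div_n ler_pdivlMr ?ltr0n ?fact_gt0 //.
rewrite -mulrA; apply: ler_wpM2l; first by rewrite exprn_ge0 // sqr_ge0.
rewrite mulrC ler_pdivrMr ?ltr0n ?fact_gt0 // ler_pdivlMl ?exprn_gt0 //.
by rewrite -natrX -natrM ler_nat mul2n pow2_fact_le_fact_double.
Qed.

(* cosh a <= expR (a^2 / 2), by comparing the power series term by term:
   the odd terms of expR a + expR (-a) cancel and the even ones are bounded
   by [even_exp_coeff_le]. *)
Lemma cosh_le_expR_sqr (a : K) : expR a + expR (- a) <= 2 * expR (a ^+ 2 / 2).
Proof.
pose f k := exp_coeff a k + exp_coeff (- a) k.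
have fE k : f k = (if odd k then 0 else 2 * (a ^+ k / k`!%:R)).
  rewrite /f /exp_coeff /= exprNn -signr_odd.
  by case: (odd k); rewrite ?expr1 ?expr0 ?mulN1r ?mul1r ?mulNr; lra.
have f_ge0 k : 0 <= f k.
  rewrite fE; case: ifP => // /negbT ok.
  by rewrite mulr_ge0 // divr_ge0 // exprn_even_ge0.
have sum_even M :
    \sum_(0 <= k < M.*2) f k = 2 * \sum_(0 <= j < M) a ^+ j.*2 / (j.*2)`!%:R.
  elim: M => [|M IH]; first by rewrite !big_geq ?mulr0.
  rewrite doubleS !big_nat_recr //= IH -addrA mulrDr; congr (_ + _).
  by rewrite !fE /= odd_double /= addr0.
have even_le M : \sum_(0 <= j < M) a ^+ j.*2 / (j.*2)`!%:R <= expR (a ^+ 2 / 2).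
  apply: (le_trans (ler_sum _ (fun j _ => even_exp_coeff_le a j))).
  apply: nondecreasing_cvgn_le; last exact: is_cvg_series_exp_coeff.
  apply: nondecreasing_series => k _ _; rewrite /exp_coeff /=.
  by rewrite divr_ge0 // exprn_ge0 // divr_ge0 // sqr_ge0.
have partial_le M :
    (series (exp_coeff a) + series (exp_coeff (- a))) M <= 2 * expR (a ^+ 2 / 2).
  have -> : (series (exp_coeff a) + series (exp_coeff (- a))) M
      = \sum_(0 <= k < M) f k by rewrite /series /= big_split.
  apply: (@le_trans _ _ (\sum_(0 <= k < M.*2) f k)).
    rewrite -addnn [X in _ <= X](@big_cat_nat _ _ _ M) ?leq_addr //=.
    by rewrite lerDl sumr_ge0.
  by rewrite sum_even ler_pM2l // even_le.
have -> : expR a + expR (- a) = limn (series (exp_coeff a) + series (exp_coeff (- a))).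
  by rewrite /expR -limD //; exact: is_cvg_series_exp_coeff.
apply: limr_le; first by apply: is_cvgD; exact: is_cvg_series_exp_coeff.
by near=> M; apply: partial_le.
Unshelve. all: by end_near.
Qed.

(* Convexity of expR on [-b, b]: expR (u x) lies below the chord through the
   endpoints, proved from the tangent-line bound 1 + z <= expR z. *)
Lemma expR_le_chord (b x u : K) : 0 < b -> - b <= x <= b ->
  expR (u * x) <= ((b - x) * expR (- (u * b)) + (b + x) * expR (u * b)) / (2 * b).
Proof.
move=> b0 /andP[xlo xhi].
set e := expR (u * x).
have tangent z : e * (1 + (z - u * x)) <= expR z.
  have -> : expR z = e * expR (z - u * x) by rewrite /e -expRD; congr expR; lra.
  by apply: ler_wpM2l; [exact: expR_ge0 | exact: expR_ge1Dx].
have bx_lo : 0 <= b - x by lra.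
have bx_hi : 0 <= b + x by lra.
rewrite ler_pdivlMr ?mulr_gt0 //.
have -> : e * (2 * b) = (b - x) * (e * (1 + (- (u * b) - u * x)))
                       + (b + x) * (e * (1 + (u * b - u * x))) by ring.
by apply: lerD; apply: ler_wpM2l; rewrite ?tangent.
Qed.

Lemma hoeffding_lemma (T : finType) (Q X : T -> K) (b u : K) : 0 < b ->
  (forall x, 0 <= Q x) -> \sum_x Q x = 1 ->
  (forall x, `|X x| <= b) -> \sum_x Q x * X x = 0 ->
  \sum_x Q x * expR (u * X x) <= expR (u ^+ 2 * b ^+ 2 / 2).
Proof.
move=> b0 Q0 Q1 Xb X0.
set Em := expR (- (u * b)); set Ep := expR (u * b).
apply: (@le_trans _ _ (\sum_x (Q x * ((Em + Ep) / 2) + Q x * X x * ((Ep - Em) / (2 * b))))).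
  apply: ler_sum => x _.
  have -> : Q x * ((Em + Ep) / 2) + Q x * X x * ((Ep - Em) / (2 * b))
      = Q x * (((b - X x) * Em + (b + X x) * Ep) / (2 * b)).
    by field; rewrite gt_eqF.
  by apply: ler_wpM2l => //; apply: expR_le_chord; rewrite // -ler_norml.
rewrite big_split /= -!mulr_suml Q1 X0 mul1r mul0r addr0 -exprMn.
have := cosh_le_expR_sqr (u * b); rewrite -/Em -/Ep; lra.
Qed.

End ExponentialBounds.

Section FiniteProbability.
Variables (K : realType) (T : finType) (P : T -> K).
Hypothesis P_ge0 : forall x, 0 <= P x.
Hypothesis P_sum1 : \sum_x P x = 1.

Lemma prob_mono (A B : pred T) : (forall x, A x -> B x) ->
  \sum_(x | A x) P x <= \sum_(x | B x) P x.
Proof.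
move=> AB; rewrite [X in X <= _]big_mkcond [X in _ <= X]big_mkcond /=.
apply: ler_sum => x _; case: (boolP (A x)) => [/AB -> //|_].
by case: ifP.
Qed.

Lemma prob_le1 (A : pred T) : \sum_(x | A x) P x <= 1.
Proof. by rewrite -P_sum1 [X in _ <= X](bigID A) /= lerDl sumr_ge0. Qed.

Lemma prob_compl (A : pred T) : \sum_(x | ~~ A x) P x = 1 - \sum_(x | A x) P x.
Proof. by rewrite -P_sum1 [\sum_x P x](bigID A) /= addrAC subrr add0r. Qed.

Lemma union_bound (I : finType) (A : I -> pred T) :
  \sum_(x | [exists i, A i x]) P x <= \sum_i \sum_(x | A i x) P x.
Proof.
rewrite (exchange_big_dep (fun x => [exists i, A i x])) /=; last first.
  by move=> i x _ Aix; apply/existsP; exists i.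
apply: ler_sum => x /existsP[i Aix].
rewrite (bigD1 i) //= lerDl; exact: sumr_ge0.
Qed.

End FiniteProbability.

Section ProductDistribution.
Variables (K : realType) (T : finType) (n : nat) (Q : 'I_n -> T -> K).
Hypothesis Q_ge0 : forall i x, 0 <= Q i x.
Hypothesis Q_sum1 : forall i, \sum_x Q i x = 1.

Definition prod_law (ys : {ffun 'I_n -> T}) : K := \prod_i Q i (ys i).

Lemma expect_prod (g : 'I_n -> T -> K) :
  \sum_(ys : {ffun 'I_n -> T}) prod_law ys * \prod_i g i (ys i)
  = \prod_i \sum_x Q i x * g i x.
Proof.
rewrite bigA_distr_bigA /=; apply: eq_bigr => ys _.
by rewrite /prod_law -big_split.
Qed.

Lemma prod_law_ge0 ys : 0 <= prod_law ys.
Proof. by apply: prodr_ge0 => i _. Qed.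

Lemma prod_law_sum1 : \sum_(ys : {ffun 'I_n -> T}) prod_law ys = 1.
Proof.
have := expect_prod (fun _ _ => 1).
rewrite (eq_bigr prod_law) => [->|ys _]; last by rewrite big1 ?mulr1.
by apply: big1 => i _; under eq_bigr do rewrite mulr1.
Qed.

Lemma expect_coord (i : 'I_n) (h : T -> K) :
  \sum_(ys : {ffun 'I_n -> T}) prod_law ys * h (ys i) = \sum_x Q i x * h x.
Proof.
have := expect_prod (fun j x => if j == i then h x else 1).
have others : \prod_(j | j != i) \sum_x Q j x * (if j == i then h x else 1) = 1.
  by apply: big1 => j /negbTE ->; under eq_bigr do rewrite mulr1.
rewrite (bigD1 i) //= others eqxx mulr1 => <-.
apply: eq_bigr => ys _.
by rewrite (bigD1 i) //= eqxx big1 ?mulr1 // => j /negbTE ->.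
Qed.

(* Chernoff's method with the exponent s = t / (n b^2), combined with
   [hoeffding_lemma] on each factor of [expect_prod]. *)
Lemma hoeffding (f : 'I_n -> T -> K) (b t : K) : 0 <= b -> 0 <= t ->
  (forall i x, `|f i x| <= b) -> (forall i, \sum_x Q i x * f i x = 0) ->
  \sum_(ys : {ffun 'I_n -> T} | t < \sum_i f i (ys i)) prod_law ys
  <= expR (- (t ^+ 2 / (2 * n%:R * b ^+ 2))).
Proof.
move=> b_ge0 t_ge0 fb f_centred.
have [d0|d_neq0] := eqVneq (2 * n%:R * b ^+ 2 : K) 0.
  rewrite d0 invr0 mulr0 oppr0 expR0.
  exact: prob_le1 prod_law_ge0 prod_law_sum1 _.
have n_gt0 : 0 < n%:R :> K.
  by rewrite lt0r ler0n andbT; apply: contra_neq d_neq0 => ->; rewrite mulr0 mul0r.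
have b_gt0 : 0 < b.
  by rewrite lt0r b_ge0 andbT; apply: contra_neq d_neq0 => ->; rewrite expr0n mulr0.
set s := t / (n%:R * b ^+ 2).
have s_ge0 : 0 <= s by rewrite divr_ge0 // mulr_ge0 // ?exprn_ge0 // ltW.
pose S (ys : {ffun 'I_n -> T}) := \sum_i f i (ys i).
have markov : \sum_(ys | t < S ys) prod_law ys
    <= \sum_ys prod_law ys * expR (s * (S ys - t)).
  rewrite big_mkcond /=; apply: ler_sum => ys _; case: ifP => tS.
    by rewrite ler_peMr ?prod_law_ge0 // -expR0 ler_expR mulr_ge0 // subr_ge0 ltW.
  by rewrite mulr_ge0 ?prod_law_ge0 ?expR_ge0.
have factor : \sum_ys prod_law ys * expR (s * (S ys - t))
    = expR (- (s * t)) * \prod_i \sum_x Q i x * expR (s * f i x).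
  rewrite -expect_prod mulr_sumr; apply: eq_bigr => ys _.
  by rewrite mulrBr expRD -expR_sum /S mulr_sumr; ring.
apply: (le_trans markov); rewrite factor.
apply: (@le_trans _ _ (expR (- (s * t)) * \prod_(i < n) expR (s ^+ 2 * b ^+ 2 / 2))).
  apply: ler_wpM2l; first exact: expR_ge0.
  apply: ler_prod => i _; apply/andP; split.
    by apply: sumr_ge0 => x _; rewrite mulr_ge0 ?expR_ge0.
  exact: hoeffding_lemma.
rewrite prodr_const card_ord -expRM_natl -expRD ler_expR /s le_eqVlt.
by apply/orP; left; apply/eqP; field; rewrite ?gt_eqF.
Qed.

End ProductDistribution.

Section PoissonLikelihood.
Variables (K : realType) (R n Y : nat) (phi : 'I_R -> 'rV[K]_R).
Variables (q : 'I_R -> 'I_Y.+1 -> K) (rs : 'I_n -> 'I_R).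
Hypothesis q_ge0 : forall r y, 0 <= q r y.
Hypothesis q_sum1 : forall r, \sum_(y < Y.+1) q r y = 1.

Local Notation sample := {ffun 'I_n -> 'I_Y.+1}.
Local Notation p := (joint_true q rs).

Lemma joint_trueE : p = prod_law (fun i => q (rs i)).
Proof. by []. Qed.

Lemma joint_true_ge0 ys : 0 <= p ys.
Proof. by rewrite joint_trueE prod_law_ge0. Qed.

Lemma joint_true_sum1 : \sum_(ys : sample) p ys = 1.
Proof. by rewrite joint_trueE prod_law_sum1. Qed.

Lemma ln_prod (I : finType) (F : I -> K) : (forall i, 0 < F i) ->
  ln (\prod_i F i) = \sum_i ln (F i).
Proof.
move=> F_gt0.
suff [] : 0 < \prod_i F i /\ ln (\prod_i F i) = \sum_i ln (F i) by [].
elim/big_rec2: _ => [|i a b _ [a_gt0 <-]]; first by rewrite ln1.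
by split; [rewrite mulr_gt0 | rewrite lnM // posrE].
Qed.

Lemma ln_pois_pmf (l : K) (y : nat) :
  0 < pois_pmf (expR l) y /\ ln (pois_pmf (expR l) y) = y%:R * l - expR l - ln (y`!%:R).
Proof.
rewrite /pois_pmf -expRM_natl -expRD.
have fact_gt0 : 0 < (y`!%:R : K) by rewrite ltr0n fact_gt0.
split; first by rewrite divr_gt0 // expR_gt0.
by rewrite ln_div ?posrE ?expR_gt0 // expRK.
Qed.

Definition suff_stat (k : 'I_R) (ys : sample) : K :=
  \sum_i ((ys i : nat)%:R : K) * phi (rs i) 0 k.
Definition log_partition (th : 'rV[K]_R) : K := \sum_i expR (lin phi (rs i) th).
Definition log_fact (ys : sample) : K := \sum_i ln (((ys i : nat)`!)%:R : K).

Lemma ln_joint_model th ys : ln (joint_model phi th rs ys)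
  = \sum_k th 0 k * suff_stat k ys - log_partition th - log_fact ys.
Proof.
rewrite /joint_model ln_prod; last by move=> i; case: (ln_pois_pmf (lin phi (rs i) th) (ys i)).
under eq_bigr do rewrite (proj2 (ln_pois_pmf _ _)).
rewrite !sumrB /log_partition /log_fact; congr (_ - _ - _).
rewrite /suff_stat /lin; under eq_bigr do rewrite mulr_sumr.
rewrite exchange_big /=; apply: eq_bigr => k _.
by rewrite mulr_sumr; apply: eq_bigr => i _; ring.
Qed.

Definition mean (i : 'I_n) : K := \sum_(y < Y.+1) q (rs i) y * (y : nat)%:R.
Definition expected_stat (k : 'I_R) : K := \sum_i mean i * phi (rs i) 0 k.

Definition deviation (k : 'I_R) (ys : sample) : K := suff_stat k ys - expected_stat k.

Lemma deviationE k ys :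
  deviation k ys = \sum_i ((ys i : nat)%:R - mean i) * phi (rs i) 0 k.
Proof. by rewrite /deviation /suff_stat -sumrB; apply: eq_bigr => i _; rewrite mulrBl. Qed.

Lemma expected_statE k : \sum_(ys : sample) p ys * suff_stat k ys = expected_stat k.
Proof.
rewrite /suff_stat; under eq_bigr do rewrite mulr_sumr.
rewrite exchange_big /=; apply: eq_bigr => i _.
under eq_bigr do rewrite mulrA.
by rewrite -mulr_suml joint_trueE (expect_coord (fun j => q_sum1 (rs j)) i (fun y => (y : nat)%:R)).
Qed.

Definition risk_const : K := \sum_(ys : sample) p ys * (ln (p ys) + log_fact ys).

Lemma riskE th : risk q phi rs th
  = n%:R^-1 * (risk_const + log_partition th - \sum_k th 0 k * expected_stat k).
Proof.
rewrite /risk; congr (_ * _).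
under eq_bigr do rewrite ln_joint_model.
rewrite (eq_bigr (fun ys => p ys * (ln (p ys) + log_fact ys) + p ys * log_partition th
   - \sum_k th 0 k * (p ys * suff_stat k ys))); last first.
  move=> ys _; suff -> : \sum_k th 0 k * (p ys * suff_stat k ys)
      = p ys * \sum_k th 0 k * suff_stat k ys by ring.
  by rewrite mulr_sumr; apply: eq_bigr => k _; ring.
rewrite sumrB big_split /= -mulr_suml joint_true_sum1 mul1r; congr (_ - _).
rewrite exchange_big /=; apply: eq_bigr => k _.
by rewrite -mulr_sumr expected_statE.
Qed.

Lemma pen_objE gamma w ys th : pen_obj phi rs gamma w ys th
  = risk q phi rs th + n%:R^-1 * (log_fact ys - risk_const)
    - n%:R^-1 * \sum_k th 0 k * deviation k ys + n%:R `^ (- gamma) * wl1 w th.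
Proof.
rewrite /pen_obj ln_joint_model riskE /deviation.
under [X in _ = _ - _ * X + _]eq_bigr do rewrite mulrBr.
rewrite sumrB; ring.
Qed.

Hypothesis phi01 : forall r k, 0 <= phi r 0 k <= 1.

Lemma mean_bounds i : 0 <= mean i <= Y%:R.
Proof.
apply/andP; split; first by apply: sumr_ge0 => y _; rewrite mulr_ge0 ?ler0n.
apply: (@le_trans _ _ (\sum_(y < Y.+1) q (rs i) y * Y%:R)).
  by apply: ler_sum => y _; rewrite ler_wpM2l // ler_nat -ltnS.
by rewrite -mulr_suml q_sum1 mul1r.
Qed.

(* Each term of [deviationE] is centred and bounded by Y in absolute value,
   so Hoeffding's inequality controls both tails of the deviation. *)
Lemma deviation_tail (k : 'I_R) (sg : bool) (t : K) : 0 <= t ->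
  prob q rs (fun ys => t < (-1) ^+ sg * deviation k ys)
  <= expR (- (t ^+ 2 / (2 * n%:R * Y%:R ^+ 2))).
Proof.
move=> t_ge0.
pose f i (y : 'I_Y.+1) := (-1) ^+ sg * (((y : nat)%:R - mean i) * phi (rs i) 0 k).
rewrite /prob joint_trueE (eq_bigl (fun ys : sample => t < \sum_i f i (ys i))) => [|ys]; last first.
  by rewrite deviationE mulr_sumr.
apply: hoeffding => //.
- move=> i y; rewrite /f normrM normrX normrN1 expr1n mul1r.
  have /andP[m_ge0 m_le] := mean_bounds i; have /andP[c_ge0 c_le1] := phi01 (rs i) k.
  have y_le : (y : nat)%:R <= Y%:R :> K by rewrite ler_nat -ltnS.
  have y_ge0 : 0 <= (y : nat)%:R :> K by [].
  rewrite normrM (ger0_norm c_ge0) -[leRHS]mulr1.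
  by apply: ler_pM => //; rewrite ler_norml; apply/andP; split; lra.
- move=> i; rewrite /f (eq_bigr (fun y => (-1) ^+ sg * phi (rs i) 0 k
      * (q (rs i) y * (y : nat)%:R - mean i * q (rs i) y))) => [|y _]; last by ring.
  by rewrite -mulr_sumr sumrB -mulr_sumr q_sum1 mulr1 subrr mulr0.
Qed.

End PoissonLikelihood.

Lemma oracle_inequality (K : realType) (Theta : Type) (risk pen noise W : Theta -> K)
    (c lam : K) (th_hat th : Theta) :
  (forall th, pen th = risk th + c - noise th + lam * W th) ->
  `|noise th_hat| <= lam * W th_hat -> `|noise th| <= lam * W th ->
  pen th_hat <= pen th -> risk th_hat <= risk th + 2 * lam * W th.
Proof.
move=> penE; rewrite !ler_norml => /andP[_ hat_le] /andP[th_ge _].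
by rewrite !penE; lra.
Qed.

Lemma weighted_sum_bound (K : realType) (I : finType) (a d c : I -> K) :
  (forall i, `|d i| <= c i) -> `|\sum_i a i * d i| <= \sum_i `|a i| * c i.
Proof.
move=> dc; apply: le_trans (ler_norm_sum _ _ _) _.
by apply: ler_sum => i _; rewrite normrM ler_wpM2l.
Qed.

(* With the threshold t = n lam w and lam = n^-gamma, the Hoeffding exponent
   t^2 / (2 n b^2) is at least wo^2 n^(1 - 2 gamma) / (2 b^2). *)
Lemma hoeffding_exponent_le (K : realType) (n : nat) (gamma w wo b : K) :
  (0 < n)%N -> 0 <= wo <= w ->
  expR (- ((n%:R * n%:R `^ (- gamma) * w) ^+ 2 / (2 * n%:R * b ^+ 2)))
  <= expR (- (wo ^+ 2 * n%:R `^ (1 - 2 * gamma)) / (2 * b ^+ 2)).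
Proof.
move=> n_gt0 /andP[wo_ge0 wo_le].
set lam := n%:R `^ (- gamma).
have n_neq0 : n%:R != 0 :> K by rewrite pnatr_eq0 -lt0n.
have n_pow : n%:R `^ (1 - 2 * gamma) = n%:R * lam ^+ 2.
  have -> : 1 - 2 * gamma = 1 + (- gamma + - gamma) by ring.
  by rewrite !powRD ?n_neq0 ?implybT // powRr1 ?ler0n // expr2.
rewrite ler_expR mulNr lerN2 n_pow (invfM (2 * n%:R)) (invfM 2 (b ^+ 2)) (invfM 2).
have [ib ib_ge0 ->] : exists2 ib : K, 0 <= ib & (b ^+ 2)^-1 = ib.
  by exists (b ^+ 2)^-1; rewrite // invr_ge0 sqr_ge0.
have -> : (n%:R * lam * w) ^+ 2 * (2^-1 * n%:R^-1 * ib)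
    = w ^+ 2 * (n%:R * lam ^+ 2) * (2^-1 * ib) by field.
apply: ler_wpM2r; first by rewrite mulr_ge0 // invr_ge0.
by apply: ler_wpM2r; [rewrite mulr_ge0 ?sqr_ge0 | nra].
Qed.

(* The bad
   event is that one of the 2R tails of a centred statistic exceeds its
   threshold n^(1-gamma) w_k. *)
Theorem theorem1 (K : realType) (R n Y : nat)
  (phi : 'I_R -> 'rV[K]_R) (q : 'I_R -> 'I_Y.+1 -> K) (rs : 'I_n -> 'I_R)
  (gamma : K) (w : 'rV[K]_R) (wo : K)
  (th_star : 'rV[K]_R) (th_hat : {ffun 'I_n -> 'I_Y.+1} -> 'rV[K]_R) :
  (0 < R)%N -> (0 < n)%N ->
  (forall r k, 0 <= phi r 0 k <= 1) ->
  (forall r y, 0 <= q r y) ->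
  (forall r, \sum_(y < Y.+1) q r y = 1) ->
  0 < gamma < 2^-1 ->
  (forall k, 0 < w 0 k) ->
  (exists k, wo = w 0 k) -> (forall k, wo <= w 0 k) ->
  (forall th, risk q phi rs th_star <= risk q phi rs th) ->
  (forall ys th, pen_obj phi rs gamma w ys (th_hat ys) <= pen_obj phi rs gamma w ys th) ->
  Num.max 0 (1 - 2 * R%:R * expR (- (wo ^+ 2 * n%:R `^ (1 - 2 * gamma)) / (2 * Y%:R ^+ 2)))
  <= prob q rs (fun ys => risk q phi rs (th_hat ys)
                          <= risk q phi rs th_star + 2 * n%:R `^ (- gamma) * wl1 w th_star).
Proof.
move=> _ n_gt0 phi01 q_ge0 q_sum1 _ w_gt0 [k0 ->] wo_min _ hat_opt.
set lam := n%:R `^ (- gamma); set E := expR _.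
pose thr k := n%:R * lam * w 0 k.
pose bad (ys : {ffun 'I_n -> 'I_Y.+1}) :=
  [exists kb : 'I_R * bool, thr kb.1 < (-1) ^+ kb.2 * deviation phi q rs kb.1 ys].
have n_gt0' : 0 < n%:R :> K by rewrite ltr0n.
have thr_ge0 k : 0 <= thr k by rewrite !mulr_ge0 ?powR_ge0 // ltW.
(* Off the bad event every deviation is below its threshold, so the noise is
   dominated by the penalty and the oracle inequality applies. *)
have noise_bound ys (th : 'rV[K]_R) : ~~ bad ys ->
    `|n%:R^-1 * \sum_k th 0 k * deviation phi q rs k ys| <= lam * wl1 w th.
  move=> /existsPn good; rewrite normrM ger0_norm ?invr_ge0 ?ler0n //.
  rewrite ler_pdivrMl // /wl1 mulr_sumr mulr_sumr.
  rewrite [leRHS](eq_bigr (fun k => `|th 0 k| * thr k)) => [|k _]; last first.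
    by rewrite normrM (gtr0_norm (w_gt0 k)) /thr; ring.
  apply: weighted_sum_bound => k.
  have := good (k, false); have := good (k, true); rewrite /= expr1 expr0 !mul1r mulN1r.
  by rewrite -!leNgt ler_norml => Dlo Dhi; apply/andP; split; lra.
have good_oracle ys : ~~ bad ys -> risk q phi rs (th_hat ys)
    <= risk q phi rs th_star + 2 * lam * wl1 w th_star.
  move=> good; apply: (oracle_inequality (pen_objE phi rs q_sum1 gamma w ys)).
  - exact: noise_bound.
  - exact: noise_bound.
  - exact: hat_opt.
have tail (kb : 'I_R * bool) :
    prob q rs (fun ys => thr kb.1 < (-1) ^+ kb.2 * deviation phi q rs kb.1 ys) <= E.
  apply: le_trans (deviation_tail rs q_ge0 q_sum1 phi01 _ _ (thr_ge0 _)) _.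
  by apply: hoeffding_exponent_le; rewrite // ltW ?w_gt0 ?wo_min.
rewrite ge_max (sumr_ge0 _ (fun ys _ => joint_true_ge0 rs q_ge0 ys)) /=.
apply: le_trans (prob_mono (joint_true_ge0 rs q_ge0) good_oracle).
rewrite (prob_compl (joint_true_sum1 rs q_sum1)) lerD2l lerN2.
apply: le_trans (union_bound (joint_true_ge0 rs q_ge0) _) _.
apply: le_trans (ler_sum _ (fun kb _ => tail kb)) _.
by rewrite sumr_const card_prod card_ord card_bool -[E *+ _]mulr_natl natrM (mulrC R%:R).
Qed.
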